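(* Let $(Q,\mathbf z)$ be a model for a tropical Plücker vector $\pi_\bullet\in\mathrm{Dr}(k,n)$. Then for every $v\in V(Q)$ such that $M_v$ is nonempty, $M_v=M(\pi^{-\mathbf b_v}_\bullet)$, and in particular $M_v$ is a matroid.
   Context: $Q$ is a finite loopless directed graph with labeled vertices $\mathbf z=(z_1,\dots,z_n)\in V(Q)^n$; directed distance $\delta(v,w)$ is the minimal walk cost where an edge is traversed forwards at cost 1 and backwards at cost $k-1$ (assumed finite, with $\delta(v,w)=1,\delta(w,v)=k-1$ for each edge $v\to w$). $(Q,\mathbf z)$ is a model for $\pi_\bullet\in\mathbb R^{\binom{[n]}k}$ if $\pi_I=-\frac1k\min_{x\in V(Q)}\sum_{i\in I}\delta(x,z_i)$ for all $I$; $v$ is a distance minimizer for $I$ if it attains this minimum. $M_v=\{I\in\binom{[n]}k: v\text{ is a distance minimizer for }I\}$. $\mathbf b_v=\frac1k(\delta(v,z_1),\dots,\delta(v,z_n))$. $\mathrm{Dr}(k,n)$: vectors such that for all $S\in\binom{[n]}{k-2}$ and $a<b<c<d\notin S$, $\min(\pi_{Sab}+\pi_{Scd},\pi_{Sac}+\pi_{Sbd},\pi_{Sad}+\pi_{Sbc})$ is attained twice. $\pi^{\mathbf x}_I=\pi_I-\sum_{i\in I}x_i$ and $M(\pi^{\mathbf x}_\bullet)=\{I:\pi^{\mathbf x}_I=\min_J\pi^{\mathbf x}_J\}$. *)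

From mathcomp Require Import all_boot all_order all_algebra.
Set Implicit Arguments. Unset Strict Implicit. Unset Printing Implicit Defensive.
Import Order.TTheory GRing.Theory Num.Theory.
Local Open Scope ring_scope.

Section Defs.
Variable V : finType.

Inductive walk (e : rel V) (k : nat) : V -> V -> nat -> Prop :=
| walk_nil v : walk e k v v 0
| walk_fwd v u w c : e v u -> walk e k u w c -> walk e k v w (1 + c)
| walk_bwd v u w c : e u v -> walk e k u w c -> walk e k v w ((k - 1) + c).

Definition is_dirdist (e : rel V) (k : nat) (delta : V -> V -> nat) : Prop :=
  forall v w, walk e k v w (delta v w) /\
              (forall c, walk e k v w c -> (delta v w <= c)%N).

Variables (n : nat) (delta : V -> V -> nat) (z : 'I_n -> V).

Definition dsum (x : V) (I : {set 'I_n}) : nat := (\sum_(i in I) delta x (z i))%N.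

Definition dist_minimizer (x : V) (I : {set 'I_n}) : bool :=
  [forall y : V, (dsum x I <= dsum y I)%N].

Variables (R : realFieldType) (k : nat).

Definition is_model (pi : {set 'I_n} -> R) : Prop :=
  forall I : {set 'I_n}, #|I| = k ->
    exists x : V, dist_minimizer x I /\ pi I = - ((dsum x I)%:R / k%:R).

Definition Mv (v : V) : {set {set 'I_n}} :=
  [set I : {set 'I_n} | (#|I| == k) && dist_minimizer v I].

Definition bv (v : V) : 'I_n -> R := fun i => (delta v (z i))%:R / k%:R.

End Defs.

Section Trop.
Variables (R : realFieldType) (n k : nat).

Definition min_twice (p q r : R) : bool :=
  [|| (p == q) && (p <= r), (p == r) && (p <= q) | (q == r) && (q <= p)].

Definition Dressian (pi : {set 'I_n} -> R) : Prop :=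
  forall S : {set 'I_n}, (#|S| + 2)%N = k ->
  forall a b c d : 'I_n, (a < b)%N -> (b < c)%N -> (c < d)%N ->
    a \notin S -> b \notin S -> c \notin S -> d \notin S ->
    min_twice (pi (a |: (b |: S)) + pi (c |: (d |: S)))
              (pi (a |: (c |: S)) + pi (b |: (d |: S)))
              (pi (a |: (d |: S)) + pi (b |: (c |: S))).

Definition pi_shift (pi : {set 'I_n} -> R) (x : 'I_n -> R) (I : {set 'I_n}) : R :=
  pi I - \sum_(i in I) x i.

Definition Mmin (pi : {set 'I_n} -> R) : {set {set 'I_n}} :=
  [set I : {set 'I_n} | (#|I| == k) &&
     [forall J : {set 'I_n}, (#|J| == k) ==> (pi I <= pi J)]].

End Trop.

Definition is_matroid (n : nat) (B : {set {set 'I_n}}) : Prop :=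
  B != set0 /\
  forall B1 B2, B1 \in B -> B2 \in B -> forall x, x \in B1 :\: B2 ->
    exists2 y, y \in B2 :\: B1 & (y |: (B1 :\ x)) \in B.

(* Write pi_v for the shifted vector pi^{-b_v}.  By the model identity,
   k * pi_v(I) = sum_(i in I) delta(v, z_i) - min_x sum_(i in I) delta(x, z_i),
   which is nonnegative and vanishes exactly when v is a distance minimizer
   for I; so if M_v is nonempty, it is the set M(pi_v) of minimizers of pi_v.
   The shift preserves the three-term Pluecker relations, which say that the
   pairing ab|cd never strictly minimizes pi_v(Sab) + pi_v(Scd) among the three
   pairings.  By induction on |B \ B'| this local exchange property yields the
   valuated matroid inequality
     pi_v(B - u + v) + pi_v(B' - v + u) <= pi_v(B) + pi_v(B')  for some v;
   in the induction step a second w in B \ B' is first exchanged into B'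
   against the v' minimizing pi_v(B' - v' + w) + pi_v(B - u + v'), and a single
   local exchange then closes the argument.  For two minimizers B, B' the
   inequality forces both exchanged sets to be minimizers: basis exchange. *)

From mathcomp Require Import all_boot all_order all_algebra.
From mathcomp Require Import lra.
Import Order.TTheory GRing.Theory Num.Theory.
Set Implicit Arguments. Unset Strict Implicit. Unset Printing Implicit Defensive.
Local Open Scope ring_scope.

Section Exchange.
Variables (T : finType) (R : realDomainType).
Implicit Types (A B S : {set T}) (a b c d u v w : T).

Definition exch B u v : {set T} := v |: (B :\ u).

Lemma card_exch B u v : u \in B -> v \notin B -> #|exch B u v| = #|B|.
Proof.
by move=> uB vB; rewrite cardsU1 (cardsD1 u B) uB !inE (negbTE vB) andbF.
Qed.

Lemma exch_setU1 A a b : a \notin A -> exch (a |: A) a b = b |: A.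
Proof. by move=> aA; rewrite /exch setU1K. Qed.

Lemma setD_exch A B v w : v \notin A -> A :\: exch B v w = (A :\: B) :\ w.
Proof.
move=> vA; apply/setP => i; rewrite !inE negb_or negb_and negbK.
by case: (eqVneq i v) => [->|_]; rewrite ?(negbTE vA) ?andbF //= andbA.
Qed.

Lemma exch_single B B' u v :
  B :\: B' = [set u] -> B' :\: B = [set v] -> exch B u v = B'.
Proof.
move=> DB DB'; rewrite /exch -DB -DB' setDDr setDv set0U.
by rewrite setIC setUC setID.
Qed.

Lemma cardsD_sym A B : #|A| = #|B| -> #|A :\: B| = #|B :\: A|.
Proof. by move=> cardAB; rewrite !cardsD cardAB setIC. Qed.

Lemma setU1CA a b S : a |: (b |: S) = b |: (a |: S).
Proof. exact: setUCA. Qed.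

Variable f : {set T} -> R.

Definition local_exchange_at S a b c d : Prop :=
  f (a |: (c |: S)) + f (b |: (d |: S)) <= f (a |: (b |: S)) + f (c |: (d |: S)) \/
  f (a |: (d |: S)) + f (b |: (c |: S)) <= f (a |: (b |: S)) + f (c |: (d |: S)).

Definition local_exchange (k : nat) : Prop :=
  forall S a b c d, (#|S| + 2)%N = k ->
    a \notin S -> b \notin S -> c \notin S -> d \notin S -> uniq [:: a; b; c; d] ->
  local_exchange_at S a b c d.

Definition exchange_ineq B B' : Prop :=
  forall u, u \in B :\: B' ->
  exists2 v, v \in B' :\: B & f (exch B u v) + f (exch B' v u) <= f B + f B'.

Lemma local_exchange_atCl S a b c d :
  local_exchange_at S b a c d -> local_exchange_at S a b c d.
Proof. by rewrite /local_exchange_at (setU1CA b a) => -[]; [right|left]; lra. Qed.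

Lemma local_exchange_atCr S a b c d :
  local_exchange_at S a b d c -> local_exchange_at S a b c d.
Proof. by rewrite /local_exchange_at (setU1CA d c) => -[]; [right|left]; lra. Qed.

Lemma local_exchange_atC S a b c d :
  local_exchange_at S c d a b -> local_exchange_at S a b c d.
Proof.
rewrite /local_exchange_at (setU1CA c a) (setU1CA d b) (setU1CA c b) (setU1CA d a).
by case=> ?; [left|right]; lra.
Qed.

Lemma exchange_ineq1 B B' :
  #|B| = #|B'| -> #|B :\: B'| = 1%N -> exchange_ineq B B'.
Proof.
move=> cardBB' /eqP/cards1P [u DB] x; rewrite DB inE => /eqP ->.
have /cards1P [v DB'] : #|B' :\: B| == 1%N by rewrite -cardsD_sym // DB cards1.
exists v; first by rewrite DB' set11.
by rewrite (exch_single DB DB') (exch_single DB' DB) addrC.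
Qed.

Section LocalToGlobal.
Variable k : nat.
Hypothesis f_local : local_exchange k.

Lemma exchange_ineq_combine B B' u w v v' :
  #|B'| = k -> u \notin B' -> w \notin B' -> w != u ->
  v \in B' -> v' \in B' -> v != v' ->
  f (exch B u v) + f (exch (exch B' v' w) v u) <= f B + f (exch B' v' w) ->
  f (exch B' v' w) + f (exch B u v') <= f (exch B' v w) + f (exch B u v) ->
  f (exch B u v') + f (exch B' v' u) <= f B + f B' \/
  f (exch B u v) + f (exch B' v u) <= f B + f B'.
Proof.
move=> cardB' uB' wB' wu vB' v'B' vv' ineq_v v'_le_v.
set S := B' :\ v :\ v'.
have DB' : B' = v |: (v' |: S) by rewrite /S setD1K ?setD1K // !inE eq_sym vv'.
have [uS wS vS v'S] : [/\ u \notin S, w \notin S, v \notin S & v' \notin S].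
  by rewrite !inE (negbTE uB') (negbTE wB') !eqxx !andbF.
have cardS : (#|S| + 2)%N = k.
  by rewrite -cardB' DB' !cardsU1 in_setU1 negb_or vv' vS v'S !add1n addn2.
have [uv uv'] : u != v /\ u != v' by split; apply: contraNneq uB' => ->.
have [wv wv'] : w != v /\ w != v' by split; apply: contraNneq wB' => ->.
have uniq_uwvv' : uniq [:: u; w; v; v'].
  by rewrite /= !inE !negb_or (eq_sym u w) wu uv uv' wv wv' vv'.
have v'vS : v' \notin v |: S by rewrite in_setU1 negb_or eq_sym vv' v'S.
have vv'S : v \notin v' |: S by rewrite in_setU1 negb_or vv' vS.
have vwS : v \notin w |: S by rewrite in_setU1 negb_or eq_sym wv vS.
have exch_v'w : exch B' v' w = w |: (v |: S) by rewrite DB' setU1CA exch_setU1.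
have exch_vw : exch B' v w = w |: (v' |: S) by rewrite DB' exch_setU1.
have exch_v'u : exch B' v' u = u |: (v |: S) by rewrite DB' setU1CA exch_setU1.
have exch_vu : exch B' v u = u |: (v' |: S) by rewrite DB' exch_setU1.
have exch_wvu : exch (w |: (v |: S)) v u = u |: (w |: S).
  by rewrite setU1CA exch_setU1.
move: ineq_v v'_le_v (f_local cardS uS wS vS v'S uniq_uwvv').
rewrite /local_exchange_at -DB' exch_v'w exch_vw exch_v'u exch_vu exch_wvu.
by move=> ? ? [?|?]; [left|right]; lra.
Qed.

Lemma exchange_ineq_step B B' (d : nat) :
  (forall C : {set T}, #|B :\: C| = d -> #|C| = k -> exchange_ineq B C) ->
  (0 < d)%N -> #|B| = k -> #|B :\: B'| = d.+1 -> #|B'| = k ->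
  exchange_ineq B B'.
Proof.
move=> IH d_gt0 cardB cardBB' cardB' u uBB'.
have [w] : exists w, w \in (B :\: B') :\ u.
  by apply/set0Pn; rewrite -card_gt0; move: cardBB'; rewrite (cardsD1 u) uBB' add1n => -[->].
rewrite !inE => /and3P [wu wB' wB].
have /set0Pn [v0 v0B'B] : B' :\: B != set0.
  by rewrite -card_gt0 -cardsD_sym ?cardBB' ?cardB.
case: (arg_minP (fun y => f (exch B' y w) + f (exch B u y)) v0B'B) => v' v'B'B v'_min.
move: uBB' (v'B'B : v' \in B' :\: B); rewrite !inE => /andP [uB' uB] /andP [v'B v'B'].
have cardB'' : #|exch B' v' w| = k by rewrite card_exch.
have uBB'' : u \in B :\: exch B' v' w by rewrite setD_exch // !inE uB uB' eq_sym wu.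
have cardBB'' : #|B :\: exch B' v' w| = d.
  by move: cardBB'; rewrite setD_exch // (cardsD1 w (B :\: B')) !inE wB wB' => -[].
have [v] := IH _ cardBB'' cardB'' u uBB''.
rewrite !inE => /andP [vB /orP [/eqP vw | /andP [vv' vB']]]; first by rewrite vw wB in vB.
move=> ineq_v; have vB'B : v \in B' :\: B by rewrite !inE vB vB'.
have [?|?] := exchange_ineq_combine cardB' uB' wB' wu vB' v'B' vv' ineq_v (v'_min v vB'B).
  by exists v'; rewrite // !inE v'B v'B'.
by exists v.
Qed.

Theorem exchange_ineq_of_local B B' : #|B| = k -> #|B'| = k -> exchange_ineq B B'.
Proof.
move=> cardB; move dE : #|B :\: B'| => d; elim: d B' dE => [|d IH] B' cardBB' cardB'.
  by move=> u; rewrite (cards0_eq cardBB') inE.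
case: d IH cardBB' => [|d] IH cardBB'; first by apply: exchange_ineq1; rewrite ?cardB.
exact: exchange_ineq_step IH _ cardB cardBB' cardB'.
Qed.

End LocalToGlobal.
End Exchange.

Lemma min_twice_le (R : realFieldType) (p q r : R) : min_twice p q r ->
  [/\ q <= p \/ r <= p, p <= q \/ r <= q & p <= r \/ q <= r].
Proof. by case/or3P => /andP [/eqP <- le]; split; rewrite ?lexx; auto. Qed.

Section DressianLocalExchange.
Variables (R : realFieldType) (n k : nat) (pi : {set 'I_n} -> R).
Hypothesis Dpi : Dressian k pi.

Lemma local_exchange_at_sorted (S : {set 'I_n}) (a b c d : 'I_n) : (#|S| + 2)%N = k ->
  (a < b)%N -> (b < c)%N -> (c < d)%N ->
  a \notin S -> b \notin S -> c \notin S -> d \notin S ->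
  [/\ local_exchange_at pi S a b c d, local_exchange_at pi S a c b d
    & local_exchange_at pi S a d b c].
Proof.
move=> cardS ab bc cd aS bS cS dS.
case: (min_twice_le (Dpi cardS ab bc cd aS bS cS dS)).
by rewrite /local_exchange_at (setU1CA c b) (setU1CA d c) (setU1CA d b).
Qed.

Lemma local_exchange_of_Dressian : local_exchange pi k.
Proof.
move=> S a b c d cardS aS bS cS dS.
rewrite /= !inE !negb_or => /and4P [/and3P [ab ac ad] /andP [bc bd] cd _].
have lt_total (i j : 'I_n) : i != j -> (i < j)%N \/ (j < i)%N.
  by move=> ij; apply/orP; rewrite -neq_ltn.
wlog ab_lt : a b aS bS ab ac ad bc bd / (a < b)%N.
  move=> W; case: (lt_total a b ab) => ?; first exact: W.
  by apply/local_exchange_atCl/W; rewrite // eq_sym.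
wlog cd_lt : c d cS dS ac ad bc bd cd / (c < d)%N.
  move=> W; case: (lt_total c d cd) => ?; first exact: W.
  by apply/local_exchange_atCr/W; rewrite // eq_sym.
wlog ac_lt : a b c d aS bS cS dS ab ac ad bc bd cd ab_lt cd_lt / (a < c)%N.
  move=> W; case: (lt_total a c ac) => ?; first exact: W.
  by apply/local_exchange_atC/W; rewrite // eq_sym.
case: (lt_total b c bc) => [bc_lt | cb_lt].
  by case: (local_exchange_at_sorted cardS ab_lt bc_lt cd_lt aS bS cS dS).
case: (lt_total b d bd) => [bd_lt | db_lt].
  by case: (local_exchange_at_sorted cardS ac_lt cb_lt bd_lt aS cS bS dS).
by case: (local_exchange_at_sorted cardS ac_lt cd_lt db_lt aS cS dS bS).
Qed.

End DressianLocalExchange.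

Lemma local_exchange_shift (R : realFieldType) n k (pi : {set 'I_n} -> R) x :
  local_exchange pi k -> local_exchange (pi_shift pi x) k.
Proof.
move=> pi_local S a b c d cardS aS bS cS dS abcd.
have sum_pair i j : i != j -> i \notin S -> j \notin S ->
    \sum_(l in i |: (j |: S)) x l = x i + x j + \sum_(l in S) x l.
  by move=> ij iS jS; rewrite !big_setU1 ?in_setU1 ?negb_or ?ij //= addrA.
move: (abcd); rewrite /= !inE !negb_or => /and4P [/and3P [ab ac ad] /andP [bc bd] cd _].
rewrite /local_exchange_at /pi_shift !sum_pair //.
by case: (pi_local S a b c d) => // ?; [left|right]; lra.
Qed.

Lemma is_matroid_Mmin (R : realFieldType) n k (f : {set 'I_n} -> R) :
  (forall B B' : {set 'I_n}, #|B| = k -> #|B'| = k -> exchange_ineq f B B') ->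
  Mmin k f != set0 -> is_matroid (Mmin k f).
Proof.
move=> f_exch Mf_neq0; split=> // B1 B2.
rewrite !inE => /andP [/eqP cardB1 /forallP B1_min] /andP [/eqP cardB2 /forallP B2_min].
move=> x xB1B2; have [y yB2B1 exch_le] := f_exch _ _ cardB1 cardB2 x xB1B2.
exists y => //; move: xB1B2 yB2B1; rewrite !inE => /andP [xB2 xB1] /andP [yB1 yB2].
rewrite -/(exch B1 x y) card_exch // cardB1 eqxx /=.
apply/forallP => J; apply/implyP => cardJ.
have := B1_min J; rewrite cardJ => B1_le_J.
have := B2_min (exch B2 y x); rewrite card_exch // cardB2 eqxx => B2_le.
lra.
Qed.

Lemma Mmin_nonneg (R : realFieldType) n k (g : {set 'I_n} -> R) (I0 : {set 'I_n}) :
  (forall I : {set 'I_n}, #|I| = k -> 0 <= g I) -> #|I0| = k -> g I0 = 0 ->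
  Mmin k g = [set I : {set 'I_n} | (#|I| == k) && (g I == 0)].
Proof.
move=> g_ge0 cardI0 gI0; apply/setP => I; rewrite !inE.
case: (#|I| =P k) => //= cardI; apply/forallP/idP => [I_min | /eqP gI J].
  by have := I_min I0; rewrite cardI0 eqxx gI0 /= eq_le g_ge0 // andbT.
by apply/implyP => /eqP cardJ; rewrite gI g_ge0.
Qed.

Section Model.
Variables (V : finType) (n : nat) (delta : V -> V -> nat) (z : 'I_n -> V).
Variables (R : realFieldType) (k : nat) (pi : {set 'I_n} -> R).
Hypotheses (k_gt0 : (0 < k)%N) (pi_model : is_model delta z k pi).
Variable v : V.

Local Notation pi_v := (pi_shift pi (fun i => - bv delta z R k v i)).

Lemma pi_shift_bv_model (I : {set 'I_n}) : #|I| = k ->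
  exists2 x, dist_minimizer delta z x I &
    pi_v I = ((dsum delta z v I)%:R - (dsum delta z x I)%:R) / k%:R.
Proof.
move=> cardI; have [x [x_min pi_I]] := pi_model cardI; exists x => //.
by rewrite /pi_shift pi_I sumrN opprK /bv -mulr_suml /dsum !natr_sum mulrBl addrC.
Qed.

Lemma pi_shift_bv_ge0 (I : {set 'I_n}) : #|I| = k -> 0 <= pi_v I.
Proof.
by move=> /pi_shift_bv_model [x /forallP x_min ->]; rewrite divr_ge0 // subr_ge0 ler_nat.
Qed.

Lemma pi_shift_bv_eq0 (I : {set 'I_n}) : #|I| = k -> (pi_v I == 0) = dist_minimizer delta z v I.
Proof.
move=> /pi_shift_bv_model [x /forallP x_min ->].
have k_neq0 : k%:R != 0 :> R by rewrite pnatr_eq0 -lt0n.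
rewrite mulf_eq0 invr_eq0 (negbTE k_neq0) orbF subr_eq0 eqr_nat.
apply/eqP/forallP => [-> // | v_min].
by apply/eqP; rewrite eqn_leq v_min x_min.
Qed.

Lemma Mv_Mmin : Mv delta z k v != set0 -> Mv delta z k v = Mmin k pi_v.
Proof.
case/set0Pn => I0; rewrite inE => /andP [/eqP cardI0 v_min].
rewrite (Mmin_nonneg pi_shift_bv_ge0 cardI0); last by apply/eqP; rewrite pi_shift_bv_eq0.
apply/setP => I; rewrite !inE; case: (#|I| =P k) => //= cardI.
by rewrite pi_shift_bv_eq0.
Qed.

End Model.

Theorem proposition3p9 (R : realFieldType) (V : finType) (e : rel V)
    (n k : nat) (z : 'I_n -> V) (delta : V -> V -> nat)
    (pi : {set 'I_n} -> R) :
  (0 < k)%N ->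
  (forall v : V, ~~ e v v) ->
  is_dirdist e k delta ->
  (forall v w : V, e v w -> delta v w = 1%N /\ delta w v = (k - 1)%N) ->
  Dressian k pi ->
  is_model delta z k pi ->
  forall v : V, Mv delta z k v != set0 ->
    Mv delta z k v = Mmin k (pi_shift pi (fun i => - bv delta z R k v i)) /\
    is_matroid (Mv delta z k v).
Proof.
(* The graph only enters through the model identity for pi. *)
move=> k_gt0 _ _ _ Dpi pi_model v Mv_neq0.
have Mv_eq := Mv_Mmin k_gt0 pi_model Mv_neq0.
split=> //; rewrite Mv_eq.
apply: is_matroid_Mmin; last by rewrite -Mv_eq.
apply: exchange_ineq_of_local.
exact/local_exchange_shift/local_exchange_of_Dressian.
Qed.
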